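(* Fix the data and parameters described in the context, and fix a choice of whether the net-zero-energy (ZEH) constraint $a\sum_{k=0}^{K}Y_k \ge \sum_{k=0}^{K}X_k$ is imposed; it is either included in both problems $(\mathrm{P})$ and $(\mathrm{LP})$ below or omitted from both. Then the optimal value (infimum of the objective over the feasible set) of problem $(\mathrm{LP})$ is less than or equal to the optimal value of problem $(\mathrm{P})$.
   Context: Data: a horizon $K\ge 1$; real numbers $Y_0,\dots,Y_K$ (PV energy production per m$^2$ at each time step) and $X_0,\dots,X_K$ (energy consumption at each time step); real prices $\Pi_{PV},\Pi_B,\Pi_R,\Pi_G$; a loss factor $\gamma$; levels $\overline{\alpha}\in(0.5,1]$, $\underline{\alpha}\in[0,0.5)$; a rate bound $R\in(0,1]$; a maximum area $a_{\max}>0$; an initial state of charge $\hat C\in\mathbb{R}$. Problem $(\mathrm{P})$ (original problem): decision variables $a,\bar C\in\mathbb{R}$, $C_0,\dots,C_K\in\mathbb{R}$, $C_1^+,\dots,C_K^+\in\mathbb{R}$. Minimize $$\Pi_{PV}a+\Pi_B\bar C+\sum_{k=1}^{K}\Pi_R\max(C_k^+-\overline{\alpha}\bar C,0)+\sum_{k=1}^{K}\Pi_G\max(\underline{\alpha}\bar C-C_k^+,0)$$ subject to, for all $k=1,\dots,K$: $C_k=\underline{\alpha}\bar C$ if $C_k^+<\underline{\alpha}\bar C$, $C_k=\overline{\alpha}\bar C$ if $C_k^+>\overline{\alpha}\bar C$, and $C_k=C_k^+$ otherwise (saturation); $C_k^+=\gamma C_{k-1}+aY_{k-1}-X_{k-1}$;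 $C_k-C_{k-1}\le R\bar C$; $C_{k-1}-C_k\le R\bar C$; and moreover $0\le a\le a_{\max}$, $C_0=\hat C$, and (optionally) $a\sum_{k=0}^{K}Y_k\ge\sum_{k=0}^{K}X_k$. Problem $(\mathrm{LP})$: decision variables $a,\bar C\in\mathbb{R}$, $C_0,\dots,C_K\in\mathbb{R}$, $\phi_1^+,\dots,\phi_K^+,\phi_1^-,\dots,\phi_K^-\in\mathbb{R}$. Minimize $$\Pi_{PV}a+\Pi_B\bar C+\sum_{k=1}^{K}\left(\Pi_R\phi_k^++\Pi_G\phi_k^-\right)$$ subject to, for all $k=1,\dots,K$: $C_k+\phi_k^+-\phi_k^-=\gamma C_{k-1}+aY_{k-1}-X_{k-1}$; $\underline{\alpha}\bar C\le C_k\le\overline{\alpha}\bar C$; $\phi_k^+\ge0$, $\phi_k^-\ge0$; $C_k-C_{k-1}\le R\bar C$; $C_{k-1}-C_k\le R\bar C$; and moreover $0\le a\le a_{\max}$, $C_0=\hat C$, and (optionally, exactly when it is imposed in $(\mathrm{P})$) $a\sum_{k=0}^{K}Y_k\ge\sum_{k=0}^{K}X_k$. *)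

From HB Require Import structures.
From mathcomp Require Import all_boot all_order all_algebra.
From mathcomp Require Import all_classical all_reals ereal.
Set Implicit Arguments. Unset Strict Implicit. Unset Printing Implicit Defensive.
Import Order.TTheory GRing.Theory Num.Theory.
Local Open Scope ring_scope.

Section PV.
Variable R : realType.

(* Problem data. Sequences are indexed by nat; only indices 0..K matter. *)
Record pv_data := PVData {
  K : nat;
  Y : nat -> R;        (* PV production per m^2 *)
  X : nat -> R;        (* consumption *)
  PiPV : R; PiB : R; PiR : R; PiG : R;
  gamma : R;
  alpha_hi : R;
  alpha_lo : R;
  Rrate : R;
  amax : R;
  Chat : R;            (* initial state of charge *)
  zeh : bool
}.

Definition pv_data_ok (d : pv_data) : Prop :=
  (1 <= K d)%N /\
  1/2 < alpha_hi d <= 1 /\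
  0 <= alpha_lo d < 1/2 /\
  0 < Rrate d <= 1 /\
  0 < amax d.

Definition zeh_constraint (d : pv_data) (a : R) : Prop :=
  \sum_(0 <= k < (K d).+1) X d k <= a * \sum_(0 <= k < (K d).+1) Y d k.

Definition P_var := (R * R * (nat -> R) * (nat -> R))%type.

Definition P_feasible (d : pv_data) (v : P_var) : Prop :=
  let: (a, Cbar, C, Cp) := v in
  (forall k, (1 <= k <= K d)%N ->
     (Cp k < alpha_lo d * Cbar -> C k = alpha_lo d * Cbar) /\
     (Cp k > alpha_hi d * Cbar -> C k = alpha_hi d * Cbar) /\
     (alpha_lo d * Cbar <= Cp k <= alpha_hi d * Cbar -> C k = Cp k) /\
     Cp k = gamma d * C k.-1 + a * Y d k.-1 - X d k.-1 /\
     C k - C k.-1 <= Rrate d * Cbar /\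
     C k.-1 - C k <= Rrate d * Cbar) /\
  0 <= a <= amax d /\
  C 0%N = Chat d /\
  (zeh d -> zeh_constraint d a).

Definition P_obj (d : pv_data) (v : P_var) : R :=
  let: (a, Cbar, C, Cp) := v in
  PiPV d * a + PiB d * Cbar
  + \sum_(1 <= k < (K d).+1) PiR d * Num.max (Cp k - alpha_hi d * Cbar) 0
  + \sum_(1 <= k < (K d).+1) PiG d * Num.max (alpha_lo d * Cbar - Cp k) 0.

Definition LP_var := (R * R * (nat -> R) * (nat -> R) * (nat -> R))%type.

Definition LP_feasible (d : pv_data) (v : LP_var) : Prop :=
  let: (a, Cbar, C, php, phm) := v in
  (forall k, (1 <= k <= K d)%N ->
     C k + php k - phm k = gamma d * C k.-1 + a * Y d k.-1 - X d k.-1 /\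
     alpha_lo d * Cbar <= C k <= alpha_hi d * Cbar /\
     0 <= php k /\ 0 <= phm k /\
     C k - C k.-1 <= Rrate d * Cbar /\
     C k.-1 - C k <= Rrate d * Cbar) /\
  0 <= a <= amax d /\
  C 0%N = Chat d /\
  (zeh d -> zeh_constraint d a).

Definition LP_obj (d : pv_data) (v : LP_var) : R :=
  let: (a, Cbar, C, php, phm) := v in
  PiPV d * a + PiB d * Cbar
  + \sum_(1 <= k < (K d).+1) (PiR d * php k + PiG d * phm k).

(* Optimal values: infimum of the objective over the feasible set, in \bar R
   (+oo if infeasible, -oo if unbounded below). *)
Definition P_value (d : pv_data) : \bar R :=
  ereal_inf [set (P_obj d v)%:E | v in [set v | P_feasible d v]]%classic.

Definition LP_value (d : pv_data) : \bar R :=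
  ereal_inf [set (LP_obj d v)%:E | v in [set v | LP_feasible d v]]%classic.

End PV.

From HB Require Import structures.
From mathcomp Require Import all_boot all_order all_algebra.
From mathcomp Require Import all_classical all_reals ereal lra.
Set Implicit Arguments. Unset Strict Implicit. Unset Printing Implicit Defensive.
Import Order.TTheory GRing.Theory Num.Theory.
Local Open Scope ring_scope.

(* Every feasible point of (P) yields a feasible point of (LP) with the same
   cost: keep a, Cbar and the states C, and let phi+ and phi- be the amounts
   max(C+ - hi Cbar, 0) and max(lo Cbar - C+, 0) cut off by saturation.  The
   saturated state lies in [lo Cbar, hi Cbar] because Cbar >= 0, which the rate
   constraint at k = 1 forces.  Hence the values of (P) form a subset of those
   of (LP), and the infimum over the larger set is smaller. *)

Section Saturation.
Variable R : realDomainType.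
Implicit Types lo hi cp c : R.

Definition saturation lo hi cp c : Prop :=
  (cp < lo -> c = lo) /\ (cp > hi -> c = hi) /\ (lo <= cp <= hi -> c = cp).

Lemma saturation_in_bounds lo hi cp c :
  lo <= hi -> saturation lo hi cp c -> lo <= c <= hi.
Proof.
move=> lohi [sat_lo [sat_hi sat_mid]].
case: (ltrP cp lo) => [/sat_lo -> | locp]; first by rewrite lexx lohi.
case: (ltrP hi cp) => [/sat_hi -> | cphi]; first by rewrite lohi lexx.
by rewrite sat_mid ?locp ?cphi.
Qed.

Lemma saturation_add_excess lo hi cp c : saturation lo hi cp c ->
  c + Num.max (cp - hi) 0 - Num.max (lo - cp) 0 = cp.
Proof.
move=> [sat_lo [sat_hi sat_mid]].
case: (ler0P (cp - hi)) => excess_hi; case: (ler0P (lo - cp)) => excess_lo.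
- rewrite sat_mid; [lra | apply/andP; split; lra].
- rewrite sat_lo; lra.
- rewrite sat_hi; lra.
- lra.
Qed.

End Saturation.

Lemma ge0_of_two_sided_bound (R : realDomainType) (x y r : R) :
  x - y <= r -> y - x <= r -> 0 <= r.
Proof. lra. Qed.

Section Relaxation.
Variables (R : realType) (d : pv_data R).

Definition LP_of_P (v : P_var R) : LP_var R :=
  let: (a, Cbar, C, Cp) := v in
  (a, Cbar, C, fun k => Num.max (Cp k - alpha_hi d * Cbar) 0,
               fun k => Num.max (alpha_lo d * Cbar - Cp k) 0).

Lemma P_feasible_capacity_ge0 a Cbar C Cp :
  (1 <= K d)%N -> 0 < Rrate d -> P_feasible d (a, Cbar, C, Cp) -> 0 <= Cbar.
Proof.
move=> K_ge1 rate_gt0 [step _].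
have first_step : (1 <= 1 <= K d)%N by rewrite leqnn K_ge1.
have [_ [_ [_ [_ [up down]]]]] := step 1%N first_step.
by rewrite -(pmulr_rge0 _ rate_gt0); apply: ge0_of_two_sided_bound up down.
Qed.

Lemma LP_of_P_feasible v :
  pv_data_ok d -> P_feasible d v -> LP_feasible d (LP_of_P v).
Proof.
case: v => [[[a Cbar] C] Cp].
move=> [K_ge1 [/andP[hi_gt _] [/andP[_ lo_lt] [/andP[rate_gt0 _] _]]]] feas.
have Cbar_ge0 := P_feasible_capacity_ge0 K_ge1 rate_gt0 feas.
have lohi : alpha_lo d * Cbar <= alpha_hi d * Cbar by apply: ler_wpM2r; lra.
case: feas => step others; split=> // k /step [sat_lo [sat_hi [sat_mid [dyn rate]]]].
have sat : saturation (alpha_lo d * Cbar) (alpha_hi d * Cbar) (Cp k) (C k) by [].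
rewrite -dyn (saturation_add_excess sat) (saturation_in_bounds lohi sat).
by rewrite !le_max !lexx !orbT.
Qed.

Lemma LP_obj_of_P v : LP_obj d (LP_of_P v) = P_obj d v.
Proof. by case: v => [[[a Cbar] C] Cp]; rewrite /LP_obj /P_obj /LP_of_P big_split !addrA. Qed.

End Relaxation.

Theorem theorem1 (R : realType) (d : pv_data R) :
  pv_data_ok d -> (LP_value d <= P_value d)%E.
Proof.
move=> ok; apply: ereal_inf_le_tmp => _ [v feas <-].
exists (LP_of_P d v); first exact: LP_of_P_feasible ok feas.
by rewrite LP_obj_of_P.
Qed.
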